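(* Let $\epsilon\in(0,1)$ and $\mathcal{Z}^{(1)},\dots,\mathcal{Z}^{(p)}\in\mathbb{C}^{n_1\times\cdots\times n_d}$. Set $\mathcal{Z}^{(0,t)}:=\mathcal{Z}^{(t)}$ for $t\in[p]$. Inductively for $j=1,\dots,d$: let $\mathbf{A}_j\in\mathbb{C}^{m_j\times n_j}$ be an $(\epsilon/(ed))$-JL embedding into $\mathbb{C}^{m_j}$ of the set $\mathcal{S}_j$ consisting of all mode-$j$ fibers of all the tensors $\mathcal{Z}^{(j-1,t)}\in\mathbb{C}^{m_1\times\cdots\times m_{j-1}\times n_j\times\cdots\times n_d}$, $t\in[p]$ (i.e., all vectors $\mathcal{Z}^{(j-1,t)}_{i_1,\dots,i_{j-1},:,i_{j+1},\dots,i_d}\in\mathbb{C}^{n_j}$ with $i_\ell\in[m_\ell]$ for $\ell<j$ and $i_\ell\in[n_\ell]$ for $\ell>j$), and then set $\mathcal{Z}^{(j,t)}:=\mathcal{Z}^{(j-1,t)}\times_j\mathbf{A}_j$. Then for all $t\in[p]$, $$\big|\|\mathcal{Z}^{(t)}\|^2-\|\mathcal{Z}^{(t)}\times_1\mathbf{A}_1\cdots\times_d\mathbf{A}_d\|^2\big|\le\epsilon\|\mathcal{Z}^{(t)}\|^2 .$$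
   Context: $\|\cdot\|$ is the Euclidean norm of a tensor (square root of the sum of squared absolute values of entries); $e$ is Euler's number. The $j$-mode product is $(\mathcal{Z}\times_j\mathbf{U})_{i_1,\dots,\ell,\dots,i_d}=\sum_{i_j}\mathcal{Z}_{i_1,\dots,i_j,\dots,i_d}\mathbf{U}_{\ell,i_j}$. A mode-$j$ fiber of a tensor is the vector obtained by fixing all indices except the $j$-th. A matrix $\mathbf{A}$ is an $\epsilon$-JL embedding of $S$ if $\|\mathbf{A}x\|_2^2=(1+\epsilon_x)\|x\|_2^2$ with $\epsilon_x\in(-\epsilon,\epsilon)$ for all $x\in S$. *)

From HB Require Import structures.
From mathcomp Require Import all_boot all_order all_algebra.
From mathcomp Require Import complex.
From mathcomp Require Import reals sequences.
Set Implicit Arguments. Unset Strict Implicit. Unset Printing Implicit Defensive.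
Import Order.TTheory GRing.Theory Num.Theory.
Local Open Scope ring_scope.

Section Defs.
Variable R : realType.
Local Notation C := (R[i]).

Definition abs2 (z : C) : R := complex.Re z ^+ 2 + complex.Im z ^+ 2.

Definition vnorm2 n (x : 'cV[C]_n) : R := \sum_(i < n) abs2 (x i 0).

Definition JL_embedding (eps : R) m n (A : 'M[C]_(m, n)) (S : 'cV[C]_n -> Prop) :=
  forall x, S x -> exists epsx : R,
    -eps < epsx < eps /\ vnorm2 (A *m x) = (1 + epsx) * vnorm2 x.

(* An order-d tensor: a map from multi-indices (0-based, ('I_d -> nat)) to C;
   only the entries inside the dimension box are ever used. *)
Definition tensor (d : nat) := ('I_d -> nat) -> C.

Definition tnorm2 d (dims : 'I_d -> nat) (Z : tensor d) : R :=
  \sum_(i : {dffun forall l : 'I_d, 'I_(dims l)}) abs2 (Z (fun l => nat_of_ord (i l))).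

Definition setidx d (i : 'I_d -> nat) (j : 'I_d) (k : nat) : 'I_d -> nat :=
  fun l => if l == j then k else i l.

(* entry (a,b) of a matrix, addressed by natural numbers (0 outside range) *)
Definition mxentry m n (A : 'M[C]_(m, n)) (a b : nat) : C :=
  match insub a, insub b with
  | Some a', Some b' => A a' b'
  | _, _ => 0
  end.

Definition modeprod d (Z : tensor d) (j : 'I_d) m n (U : 'M[C]_(m, n)) : tensor d :=
  fun i => \sum_(k < n) Z (setidx i j k) * mxentry U (i j) k.

(* stage k : Z x_1 A_1 ... x_k A_k  (modes 0..k-1 in 0-based numbering) *)
Fixpoint stage d (n m : 'I_d -> nat) (A : forall j : 'I_d, 'M[C]_(m j, n j))
    (k : nat) (Z : tensor d) : tensor d :=
  match k with
  | 0 => Z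
  | k'.+1 =>
      match (insub k' : option 'I_d) with
      | Some j => modeprod (stage A k' Z) j (A j)
      | None => stage A k' Z
      end
  end.

Definition stage_dims d (n m : 'I_d -> nat) (k : nat) : 'I_d -> nat :=
  fun l => if ((l : nat) < k)%N then m l else n l.

Definition fibers d (n m : 'I_d -> nat) (A : forall j : 'I_d, 'M[C]_(m j, n j))
    p (Z : 'I_p -> tensor d) (j : 'I_d) : 'cV[C]_(n j) -> Prop :=
  fun x => exists t : 'I_p, exists i : 'I_d -> nat,
    (forall l : 'I_d, l != j -> (i l < stage_dims n m j l)%N) /\
    x = \col_(k < n j) stage A j (Z t) (setidx i j k).

End Defs.
Arguments fibers {R d n m} A {p} Z j _.

From HB Require Import structures.
From mathcomp Require Import all_boot all_order all_algebra.
From mathcomp Require Import complex.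
From mathcomp Require Import reals sequences.
From mathcomp Require Import ring lra exp.
From mathcomp Require Import boolp.
Set Implicit Arguments. Unset Strict Implicit. Unset Printing Implicit Defensive.
Import Order.TTheory GRing.Theory Num.Theory.
Local Open Scope ring_scope.

(* With del = eps / (e d), the j-th mode product changes the squared norm by a
   factor in [1 - del, 1 + del]: the squared norm of a tensor is the sum of the
   squared norms of its mode-j fibers, A_j acts on each fiber separately, and
   every such fiber lies in S_j.  After d steps the total factor lies between
   (1 - del)^d >= 1 - d del >= 1 - eps/2 and
   (1 + del)^d <= 1 / (1 - del)^d <= 1 / (1 - eps/2) <= 1 + eps. *)

Section Tensors.
Variable R : realType.
Local Notation C := (R[i]).

Lemma abs2_ge0 (z : C) : 0 <= abs2 z.
Proof. by rewrite /abs2 addr_ge0 // sqr_ge0. Qed.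

Lemma vnorm2_ge0 k (x : 'cV[C]_k) : 0 <= vnorm2 x.
Proof. by apply: sumr_ge0 => i _; apply: abs2_ge0. Qed.

Lemma tnorm2_ge0 d (D : 'I_d -> nat) (Y : tensor R d) : 0 <= tnorm2 D Y.
Proof. by apply: sumr_ge0 => i _; apply: abs2_ge0. Qed.

Lemma vnorm2_col k (f : 'I_k -> C) : vnorm2 (\col_(a < k) f a) = \sum_(a < k) abs2 (f a).
Proof. by apply: eq_bigr => a _; rewrite mxE. Qed.

Lemma JL_embedding_dist (del : R) k l (U : 'M[C]_(k, l)) S x :
  JL_embedding del U S -> S x -> `|vnorm2 (U *m x) - vnorm2 x| <= del * vnorm2 x.
Proof.
move=> JL /JL[e [/andP[lo hi] ->]].
rewrite mulrDl mul1r addrAC subrr add0r normrM (ger0_norm (vnorm2_ge0 x)).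
by apply: (ler_wpM2r (vnorm2_ge0 x)); rewrite ler_norml !ltW.
Qed.

Lemma setidx_id d (i : 'I_d -> nat) j k : setidx i j k j = k.
Proof. by rewrite /setidx eqxx. Qed.

Lemma setidx_setidx d (i : 'I_d -> nat) j k k' : setidx (setidx i j k) j k' = setidx i j k'.
Proof. by apply: funext => l; rewrite /setidx; case: (l == j). Qed.

Lemma mxentryE k l (U : 'M[C]_(k, l)) (a : 'I_k) (b : 'I_l) : mxentry U a b = U a b.
Proof. by rewrite /mxentry !valK. Qed.

Lemma col_modeprod d (Y : tensor R d) j k l (U : 'M[C]_(k, l)) (i : 'I_d -> nat) :
  \col_(a < k) modeprod Y j U (setidx i j a) = U *m \col_(b < l) Y (setidx i j b).
Proof.
apply/matrixP => a z; rewrite !mxE; apply: eq_bigr => b _.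
by rewrite mxE mulrC setidx_setidx setidx_id mxentryE.
Qed.

(* Boxes with different side lengths are all embedded in the cube {0..N}^d, a
   single finType in which the mode-j fibers are indexed by the points whose
   j-th coordinate is pinned to 0. *)
Section BoxSums.
Variables (d N : nat) (D : 'I_d -> nat).
Hypothesis D_le : forall l, (D l <= N)%N.
Local Notation cube := {ffun 'I_d -> 'I_N.+1}.

Lemma sum_box_cube (G : ('I_d -> nat) -> R) :
  \sum_(i : {dffun forall l : 'I_d, 'I_(D l)}) G (fun l => i l) =
  \sum_(f : cube | [forall l, (f l < D l)%N]) G (fun l => f l).
Proof.
pose h (i : {dffun forall l : 'I_d, 'I_(D l)}) : cube := [ffun l => inord (i l)].
have hE i l : h i l = i l :> nat.
  by rewrite ffunE inordK // ltnS (leq_trans _ (D_le l)) // ltnW.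
have h_inj : injective h.
  by move=> i1 i2 E; apply/ffunP => l; apply: val_inj; rewrite /= -!hE E.
have box_image f : (f \in h @: setT) = [forall l, (f l < D l)%N].
  apply/imsetP/forallP => [[i _ ->] l | f_box]; first by rewrite hE.
  exists [ffun l => Ordinal (f_box l)] => //.
  by apply/ffunP => l; apply: val_inj; rewrite /= hE ffunE.
rewrite -(eq_bigl _ _ box_image) big_imset /=; last exact: in2W.
apply: eq_big => [i | i _]; first by rewrite in_setT.
by congr G; apply: funext => l; rewrite hE.
Qed.

Definition slice (j : 'I_d) (g : cube) :=
  (g j == ord0) && [forall l, (l != j) ==> (g l < D l)%N].

Lemma sum_cube_fibers (j : 'I_d) (G : ('I_d -> nat) -> R) :
  \sum_(f : cube | [forall l, (f l < D l)%N]) G (fun l => f l) =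
  \sum_(g | slice j g) \sum_(k < D j) G (setidx (fun l => g l) j k).
Proof.
pose z (f : cube) : cube := [ffun l => if l == j then ord0 else f l].
rewrite (partition_big z (slice j)); last first.
  move=> f /forallP f_box; rewrite /slice ffunE eqxx /=; apply/forallP => l.
  by rewrite ffunE; case: (l == j) => //=; apply: f_box.
apply: eq_bigr => g /andP[/eqP g0 /forallP g_box].
pose u (k : 'I_N.+1) : cube := [ffun l => if l == j then k else g l].
rewrite (reindex_onto u (fun f => f j)); last first.
  move=> f /andP[_ /eqP zf]; apply/ffunP => l; rewrite !ffunE -zf ffunE.
  by case: (altP (l =P j)) => [->|].
rewrite (big_ord_widen N.+1 (fun k => G (setidx (fun l => g l) j k))) ?leqW //.
apply: eq_big => [k | k _].
  rewrite ffunE !eqxx andbT.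
  have -> : z (u k) == g.
    by apply/eqP/ffunP => l; rewrite !ffunE; case: (altP (l =P j)) => [->|].
  rewrite andbT; apply/forallP/idP => [/(_ j) | k_lt l]; first by rewrite ffunE eqxx.
  rewrite ffunE; case: (altP (l =P j)) => [-> //| ne].
  by have := g_box l; rewrite ne.
congr G; apply: funext => l.
by rewrite ffunE /setidx; case: (l == j).
Qed.

Lemma tnorm2_fibers (j : 'I_d) (Y : tensor R d) :
  tnorm2 D Y = \sum_(g | slice j g) \sum_(k < D j) abs2 (Y (setidx (fun l => g l) j k)).
Proof.
by rewrite /tnorm2 (sum_box_cube (fun i => abs2 (Y i))) (sum_cube_fibers j (fun i => abs2 (Y i))).
Qed.

End BoxSums.

Arguments slice {d N} D j g.

Lemma tnorm2_modeprod_JL d (D D' : 'I_d -> nat) (j : 'I_d) mj nj (U : 'M[C]_(mj, nj))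
    (del : R) S (Y : tensor R d) :
  D j = nj -> D' j = mj -> (forall l, l != j -> D' l = D l) ->
  JL_embedding del U S ->
  (forall i, (forall l, l != j -> (i l < D l)%N) -> S (\col_(k < nj) Y (setidx i j k))) ->
  `|tnorm2 D' (modeprod Y j U) - tnorm2 D Y| <= del * tnorm2 D Y.
Proof.
move=> Dj D'j D'_D JL fibers_in_S; subst nj mj.
pose N := (\max_l (D l + D' l))%N.
have D_le l : (D l <= N)%N.
  by apply: leq_trans (leq_bigmax (F := fun l => (D l + D' l)%N) l); apply: leq_addr.
have D'_le l : (D' l <= N)%N.
  by apply: leq_trans (leq_bigmax (F := fun l => (D l + D' l)%N) l); apply: leq_addl.
have same_slices (g : {ffun 'I_d -> 'I_N.+1}) : slice D' j g = slice D j g.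
  rewrite /slice; congr (_ && _); apply: eq_forallb => l.
  by case: (altP (l =P j)) => //= ne; rewrite D'_D.
rewrite (tnorm2_fibers D'_le j) (tnorm2_fibers D_le j) (eq_bigl _ _ same_slices).
rewrite -sumrB mulr_sumr; apply: le_trans (ler_norm_sum _ _ _) _.
apply: ler_sum => g /andP[_ /forallP g_box].
rewrite -!vnorm2_col col_modeprod; apply: JL_embedding_dist JL (fibers_in_S _ _) => l ne.
by have := g_box l; rewrite ne.
Qed.

Section Stages.
Variables (d : nat) (n m : 'I_d -> nat) (A : forall j : 'I_d, 'M[C]_(m j, n j)).

Lemma stageS (j : 'I_d) (Y : tensor R d) : stage A j.+1 Y = modeprod (stage A j Y) j (A j).
Proof. by rewrite /= valK. Qed.

Lemma stage_dims0 : stage_dims n m 0 = n.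
Proof. exact: funext. Qed.

Lemma stage_dims_all : stage_dims n m d = m.
Proof. by apply: funext => l; rewrite /stage_dims ltn_ord. Qed.

Lemma stage_dimsS (j l : 'I_d) : l != j -> stage_dims n m j.+1 l = stage_dims n m j l.
Proof.
move=> ne; rewrite /stage_dims ltnS leq_eqVlt.
suff -> : (l == j :> nat) = false by [].
by apply: negbTE; apply: contra ne => /eqP/val_inj ->.
Qed.

Lemma tnorm2_stageS_JL p (Z : 'I_p -> tensor R d) (del : R) (j : 'I_d) (t : 'I_p) :
  JL_embedding del (A j) (fibers A Z j) ->
  `|tnorm2 (stage_dims n m j.+1) (stage A j.+1 (Z t))
    - tnorm2 (stage_dims n m j) (stage A j (Z t))|
  <= del * tnorm2 (stage_dims n m j) (stage A j (Z t)).
Proof.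
move=> JL; rewrite stageS; apply: tnorm2_modeprod_JL JL _.
- by rewrite /stage_dims ltnn.
- by rewrite /stage_dims ltnSn.
- exact: stage_dimsS.
- by move=> i i_box; exists t, i.
Qed.

End Stages.

End Tensors.

Section Distortion.
Variable R : realFieldType.

Lemma bernoulli_subr (x : R) k : 0 <= x <= 1 -> 1 - k%:R * x <= (1 - x) ^+ k.
Proof.
move=> /andP[x0 x1]; elim: k => [|k IH]; first by rewrite mul0r subr0 expr0.
have y0 : 0 <= (1 - x) ^+ k by apply: exprn_ge0; lra.
have y1 : (1 - x) ^+ k <= 1 by apply: exprn_ile1; lra.
rewrite exprS -natr1; nra.
Qed.

Lemma distortion_scale_bounds (eps c : R) k : 0 <= eps <= 1 -> 2 <= c ->
  0 <= eps / (c * k%:R) <= 1 /\ k%:R * (eps / (c * k%:R)) <= eps / 2.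
Proof.
move=> /andP[eps0 eps1] c2; case: k => [|k].
  by rewrite !mulr0 invr0 mulr0 mul0r lexx ler01; split=> //; lra.
have k1 : 1 <= k.+1%:R :> R by rewrite ler1n.
have -> : k.+1%:R * (eps / (c * k.+1%:R)) = eps / c by field; apply/andP; split; lra.
have epsc : eps / c <= eps / 2 by rewrite ler_pdivrMr; [nra | lra].
have del0 : 0 <= eps / (c * k.+1%:R) by apply: divr_ge0 => //; apply: mulr_ge0; lra.
split=> //; apply/andP; split=> //.
rewrite ler_pdivrMr; last by apply: mulr_gt0; lra.
nra.
Qed.

Lemma expn_distortion (eps del : R) k : 0 <= del -> k%:R * del <= eps / 2 -> eps <= 1 ->
  1 - eps <= (1 - del) ^+ k /\ (1 + del) ^+ k <= 1 + eps.
Proof.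
move=> del0; case: k => [|k] k_del eps1; first by rewrite !expr0; rewrite mul0r in k_del; lra.
have k1 : 1 <= k.+1%:R :> R by rewrite ler1n.
have del1 : del <= 1 by nra.
have eps0 : 0 <= eps by nra.
have lo : 1 - eps / 2 <= (1 - del) ^+ k.+1 by apply: le_trans (bernoulli_subr _ _); lra.
have up_ge0 : 0 <= (1 + del) ^+ k.+1 by apply: exprn_ge0; lra.
have up_lo : (1 + del) ^+ k.+1 * (1 - del) ^+ k.+1 <= 1.
  by rewrite -exprMn; apply: exprn_ile1; nra.
have : (1 + del) ^+ k.+1 * (1 - eps / 2) <= 1.
  by apply: le_trans up_lo; apply: ler_wpM2l.
split; [lra | nra].
Qed.

Lemma drift_bounds (w : nat -> R) (del : R) K : 0 <= del <= 1 ->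
  (forall k, (k < K)%N -> `|w k.+1 - w k| <= del * w k) ->
  (1 - del) ^+ K * w 0 <= w K <= (1 + del) ^+ K * w 0.
Proof.
move=> /andP[del0 del1] step; elim: K step => [|K IH] step.
  by rewrite expr0 !mul1r lexx.
have /andP[lo hi] := IH (fun k k_lt => step k (ltnW k_lt)).
have := step K (ltnSn K); rewrite ler_norml => /andP[w_lo w_hi].
have := ler_wpM2l (_ : 0 <= 1 - del) lo; have := ler_wpM2l (_ : 0 <= 1 + del) hi.
rewrite !exprS -!mulrA => a1 a2; apply/andP; split.
  by apply: le_trans (a2 _) _; lra.
by apply: le_trans (a1 _); lra.
Qed.

Lemma drift_distortion (w : nat -> R) (del eps : R) K : 0 <= del <= 1 -> 0 <= w 0 ->
  1 - eps <= (1 - del) ^+ K -> (1 + del) ^+ K <= 1 + eps ->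
  (forall k, (k < K)%N -> `|w k.+1 - w k| <= del * w k) ->
  `|w 0 - w K| <= eps * w 0.
Proof.
move=> del01 w0 lo hi /(drift_bounds del01)/andP[w_lo w_hi].
have := ler_wpM2r w0 lo; have := ler_wpM2r w0 hi.
rewrite ler_norml; lra.
Qed.

End Distortion.

Theorem lemma12 (R : realType) (d p : nat) (n m : 'I_d -> nat) (eps : R)
  (heps : 0 < eps < 1)
  (Z : 'I_p -> tensor R d)
  (A : forall j : 'I_d, 'M[R[i]]_(m j, n j))
  (hJL : forall j : 'I_d,
     JL_embedding (eps / (expR 1 * d%:R)) (A j) (fibers A Z j)) :
  forall t : 'I_p,
    `| tnorm2 n (Z t) - tnorm2 m (stage A d (Z t)) | <= eps * tnorm2 n (Z t).
Proof.
move=> t; have eps01 : 0 <= eps <= 1 by case/andP: heps => eps0 eps1; rewrite !ltW.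
have e2 : 2 <= expR 1 :> R by have := expR_ge1Dx (1 : R); lra.
have [del01 d_del] := distortion_scale_bounds d eps01 e2.
have [lo hi] := expn_distortion (proj1 (andP del01)) d_del (proj2 (andP eps01)).
pose w k := tnorm2 (stage_dims n m k) (stage A k (Z t)).
have := drift_distortion (w := w) del01 (tnorm2_ge0 _ _) lo hi.
rewrite /w stage_dims0 stage_dims_all; apply=> k k_lt.
exact: tnorm2_stageS_JL (hJL (Ordinal k_lt)).
Qed.
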